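(* Let $\mathcal{E}_1=[\theta_1,u_1]$ and $\mathcal{E}_2=[\theta_2,u_2]$ be interval effect algebras, each generating its ordered linear space, each having an order-determining set of states, and each unrestricted. If two instruments $\mathcal{I},\mathcal{J}$ from $\mathcal{E}_1$ to $\mathcal{E}_2$ coexist, then the observables $\widehat{\mathcal{I}}$ and $\widehat{\mathcal{J}}$ on $\mathcal{E}_1$ coexist.
   Context: Let $V$ be a real vector space with zero $\theta$ and $K\subseteq V$ a positive cone ($\mathbb{R}^+K\subseteq K$, $K+K\subseteq K$, $K\cap(-K)=\{\theta\}$), ordered by $x\le y$ iff $y-x\in K$. For $u\in K$, $u\ne\theta$, the interval effect algebra is $\mathcal{E}=[\theta,u]=\{x\in K: x\le u\}$; for $a,b\in\mathcal{E}$, $a\perp b$ means $a+b\le u$. $\mathcal{E}$ generates $V$ means $K=\mathbb{R}^+\mathcal{E}$ and $V=K-K$. A state is $s\colon\mathcal{E}\to[0,1]$ with $s(u)=1$ and $s(a+b)=s(a)+s(b)$ whenever $a\perp b$; $\mathcal{S}(\mathcal{E})$ is the set of all states. Order-determining: $a\le b$ iff $s(a)\le s(b)$ for all $s\in\mathcal{S}(\mathcal{E})$. Affine = preserves finite convex combinations. Unrestricted: every affine $f\colon\mathcal{S}(\mathcal{E})\to[0,1]$ has the form $f(s)=s(a)$ for some $a\in\mathcal{E}$. A substate is $\lambda s$ with $\lambda\in[0,1]$, $s\in\mathcal{S}(\mathcal{E})$. An operation from $\mathcal{E}_1$ to $\mathcal{E}_2$ is an affine map $\mathcal{I}\colon\mathcal{S}(\mathcal{E}_1)\to\{\text{substates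 on }\mathcal{E}_2\}$; a channel is an operation with values in $\mathcal{S}(\mathcal{E}_2)$. An observable on $\mathcal{E}$ is a finite family $A=\{A_x:x\in\Omega_A\}\subseteq\mathcal{E}$ with $\sum_x A_x=u$. Observables $A,B$ on $\mathcal{E}$ coexist if there is an observable $C=\{C_{xy}:(x,y)\in\Omega_A\times\Omega_B\}$ on $\mathcal{E}$ with $\sum_y C_{xy}=A_x$ for all $x$ and $\sum_x C_{xy}=B_y$ for all $y$. An instrument from $\mathcal{E}_1$ to $\mathcal{E}_2$ is a finite family $\mathcal{I}=\{\mathcal{I}_x:x\in\Omega_{\mathcal{I}}\}$ of operations from $\mathcal{E}_1$ to $\mathcal{E}_2$ such that the pointwise sum $\sum_x\mathcal{I}_x$ is a channel. For such $\mathcal{I}$, $\widehat{\mathcal{I}}_x\in\mathcal{E}_1$ denotes the unique effect with $s(\widehat{\mathcal{I}}_x)=\mathcal{I}_x(s)(u_2)$ for all $s\in\mathcal{S}(\mathcal{E}_1)$, and $\widehat{\mathcal{I}}=\{\widehat{\mathcal{I}}_x:x\in\Omega_{\mathcal{I}}\}$ is an observable on $\mathcal{E}_1$ (the observable measured by $\mathcal{I}$). Instruments $\mathcal{I}$ (outcome space $\Omega_1$) and $\mathcal{J}$ (outcome space $\Omega_2$) from $\mathcal{E}_1$ to $\mathcal{E}_2$ coexist if there is an instrument $\mathcal{K}=\{\mathcal{K}_{xy}:(x,y)\in\Omega_1\times\Omega_2\}$ from $\mathcal{E}_1$ to $\mathcal{E}_2$ with $\sum_{y}\mathcal{K}_{xy}=\mathcal{I}_x$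 for all $x$ and $\sum_x\mathcal{K}_{xy}=\mathcal{J}_y$ for all $y$. *)

From HB Require Import structures.
From mathcomp Require Import all_boot all_order all_algebra.
From mathcomp Require Import reals.
Set Implicit Arguments. Unset Strict Implicit. Unset Printing Implicit Defensive.
Import Order.TTheory GRing.Theory Num.Theory.
Local Open Scope ring_scope.

Section OneSpace.
Variables (R : realType) (V : lmodType R) (K : V -> Prop) (u : V).

Definition positive_cone : Prop :=
  [/\ (forall (r : R) x, 0 <= r -> K x -> K (r *: x)),
      (forall x y, K x -> K y -> K (x + y)) &
      (forall x, K x -> K (- x) -> x = 0)].

Definition vle (x y : V) : Prop := K (y - x).

Definition in_E (x : V) : Prop := K x /\ vle x u.

Definition interval_EA : Prop := [/\ positive_cone, K u & u <> 0].

Definition generates : Prop :=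
  (forall x, K x <-> exists (r : R) a, [/\ 0 <= r, in_E a & x = r *: a]) /\
  (forall v, exists x y, [/\ K x, K y & v = x - y]).

(* A state on E, represented canonically as a function V -> R that vanishes
   outside E (values outside E carry no information). *)
Definition is_state (s : V -> R) : Prop :=
  [/\ (forall a, in_E a -> 0 <= s a <= 1),
      (forall a, ~ in_E a -> s a = 0),
      s u = 1 &
      (forall a b, in_E a -> in_E b -> vle (a + b) u -> s (a + b) = s a + s b)].

Definition order_determining : Prop :=
  forall a b, in_E a -> in_E b ->
    (vle a b <-> forall s, is_state s -> s a <= s b).

Definition convex_weights (n : nat) (l : 'I_n -> R) : Prop :=
  (forall i, 0 <= l i) /\ \sum_(i < n) l i = 1.

Definition conv (W : Type) (n : nat) (l : 'I_n -> R) (s : 'I_n -> W -> R) : W -> R :=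
  fun v => \sum_(i < n) l i * s i v.

Definition affine_state_fun (f : (V -> R) -> R) : Prop :=
  forall n (l : 'I_n -> R) (s : 'I_n -> V -> R),
    convex_weights l -> (forall i, is_state (s i)) ->
    f (conv l s) = \sum_(i < n) l i * f (s i).

Definition unrestricted : Prop :=
  forall f : (V -> R) -> R, affine_state_fun f ->
    (forall s, is_state s -> 0 <= f s <= 1) ->
    exists a, in_E a /\ forall s, is_state s -> f s = s a.

Definition is_substate (t : V -> R) : Prop :=
  exists (l : R) s, [/\ 0 <= l <= 1, is_state s & t = (fun v => l * s v)].

Definition observable (T : finType) (A : T -> V) : Prop :=
  (forall x, in_E (A x)) /\ \sum_(x : T) A x = u.

Definition coexist_obs (T1 T2 : finType) (A : T1 -> V) (B : T2 -> V) : Prop :=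
  exists C : T1 * T2 -> V,
    [/\ observable C,
        (forall x, \sum_(y : T2) C (x, y) = A x) &
        (forall y, \sum_(x : T1) C (x, y) = B y)].

End OneSpace.

Section TwoSpaces.
Variables (R : realType) (V1 V2 : lmodType R) (K1 : V1 -> Prop) (u1 : V1)
          (K2 : V2 -> Prop) (u2 : V2).

(* operation: affine map from S(E1) to substates on E2 (only its values on
   states matter) *)
Definition operation (I : (V1 -> R) -> (V2 -> R)) : Prop :=
  (forall s, is_state K1 u1 s -> is_substate K2 u2 (I s)) /\
  (forall n (l : 'I_n -> R) (s : 'I_n -> V1 -> R),
     convex_weights l -> (forall i, is_state K1 u1 (s i)) ->
     I (conv l s) = conv l (fun i => I (s i))).

Definition instrument (T : finType) (I : T -> (V1 -> R) -> (V2 -> R)) : Prop :=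
  (forall x, operation (I x)) /\
  (forall s, is_state K1 u1 s -> is_state K2 u2 (fun w => \sum_(x : T) I x s w)).

(* equality of operations = equality as maps on S(E1) *)
Definition coexist_instr (T1 T2 : finType)
  (I : T1 -> (V1 -> R) -> (V2 -> R)) (J : T2 -> (V1 -> R) -> (V2 -> R)) : Prop :=
  exists Kk : T1 * T2 -> (V1 -> R) -> (V2 -> R),
    [/\ instrument Kk,
        (forall x s, is_state K1 u1 s ->
           (fun w => \sum_(y : T2) Kk (x, y) s w) = I x s) &
        (forall y s, is_state K1 u1 s ->
           (fun w => \sum_(x : T1) Kk (x, y) s w) = J y s)].

Definition measured_obs (T : finType) (I : T -> (V1 -> R) -> (V2 -> R))
  (hatI : T -> V1) : Prop :=
  forall x, in_E K1 u1 (hatI x) /\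
    forall s, is_state K1 u1 s -> s (hatI x) = I x s u2.

End TwoSpaces.

(* Each operation K(x,y) of the joint instrument, evaluated at the unit u2,
   is an affine map from states of E1 to [0,1]; since E1 is unrestricted it is
   the state evaluation at an effect C(x,y) of E1.  The family C is the joint
   observable: its sums over y (over x, over both) and the effects hatI x
   (hatJ y, u1) have the same value in every state, because the marginals of
   K are I and J and the total of K is a channel.  Equal state values force
   equality of effects because the states of E1 are order-determining; the
   same fact shows that the partial sums of C stay inside [0, u1]. *)
From mathcomp Require Import all_boot all_order all_algebra.
From mathcomp Require Import reals.
Set Implicit Arguments. Unset Strict Implicit. Unset Printing Implicit Defensive.
Import Order.TTheory GRing.Theory Num.Theory.
Local Open Scope ring_scope.

Section Effects.
Variables (R : realType) (V : lmodType R) (K : V -> Prop) (u : V).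
Hypothesis EA : interval_EA K u.

Lemma cone0 : K 0.
Proof. by case: EA => [[Kscale _ _] Ku _]; rewrite -(scale0r u); apply: Kscale. Qed.

Lemma in_E0 : in_E K u 0.
Proof. by split; [exact: cone0 | rewrite /vle subr0; case: EA]. Qed.

Lemma in_Eu : in_E K u u.
Proof. by case: EA => _ Ku _; split; rewrite // /vle subrr; exact: cone0. Qed.

Lemma in_E_compl a : in_E K u a -> in_E K u (u - a).
Proof. by case=> Ka le_au; split; rewrite // /vle opprB addrC subrK. Qed.

Lemma state_ge0 s a : is_state K u s -> in_E K u a -> 0 <= s a.
Proof. by case=> s01 _ _ _ Ea; case/andP: (s01 a Ea). Qed.

Lemma state_le1 s a : is_state K u s -> in_E K u a -> s a <= 1.
Proof. by case=> s01 _ _ _ Ea; case/andP: (s01 a Ea). Qed.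

Lemma state0 s : is_state K u s -> s 0 = 0.
Proof.
case=> _ _ _ sD; have := sD 0 0 in_E0 in_E0.
rewrite addr0 => /(_ (in_E0.2)) s00.
by apply/(@addrI _ (s 0)); rewrite addr0 -s00.
Qed.

Lemma state_compl s a : is_state K u s -> in_E K u a -> s (u - a) = 1 - s a.
Proof.
move=> st Ea; case: (st) => _ _ su sD.
have := sD a (u - a) Ea (in_E_compl Ea); rewrite addrC subrK su.
by move=> /(_ in_Eu.2) ->; rewrite addrAC subrr add0r.
Qed.

Hypothesis OD : order_determining K u.

Lemma effect_eq_states a b : in_E K u a -> in_E K u b ->
  (forall s, is_state K u s -> s a = s b) -> a = b.
Proof.
move=> Ea Eb sab; case: EA => [[_ _ Kanti] _ _].
have le_ab : vle K a b by apply/(OD Ea Eb) => s st; rewrite sab.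
have le_ba : vle K b a by apply/(OD Eb Ea) => s st; rewrite sab.
by apply/esym/subr0_eq/Kanti; rewrite // opprB.
Qed.

(* a + b lies below u because b <= u - a is tested on states. *)
Lemma in_ED a b : in_E K u a -> in_E K u b ->
  (forall s, is_state K u s -> s a + s b <= 1) -> in_E K u (a + b).
Proof.
move=> Ea Eb sab1; case: EA => [[_ KD _] _ _].
have le_b_ua : vle K b (u - a).
  by apply/(OD Eb (in_E_compl Ea)) => s st; rewrite state_compl // lerBrDl sab1.
split; first by apply: KD; [case: Ea | case: Eb].
by move: le_b_ua; rewrite /vle opprD addrA.
Qed.

Lemma in_E_big_additive (I : Type) (r : seq I) (F : I -> V) :
  (forall i, in_E K u (F i)) ->
  (forall s, is_state K u s -> \sum_(i <- r) s (F i) <= 1) ->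
  in_E K u (\sum_(i <- r) F i) /\
  (forall s, is_state K u s -> s (\sum_(i <- r) F i) = \sum_(i <- r) s (F i)).
Proof.
move=> EF; elim: r => [|i r IHr] sF1.
  by rewrite big_nil; split=> [|s st]; [exact: in_E0 | rewrite big_nil state0].
have [Er sr] : in_E K u (\sum_(j <- r) F j) /\
    (forall s, is_state K u s -> s (\sum_(j <- r) F j) = \sum_(j <- r) s (F j)).
  apply: IHr => s st; apply: le_trans (sF1 s st).
  by rewrite big_cons lerDr state_ge0.
have sir1 s : is_state K u s -> s (F i) + s (\sum_(j <- r) F j) <= 1.
  by move=> st; rewrite sr //; move: (sF1 s st); rewrite big_cons.
have Eir := in_ED (EF i) Er sir1.
rewrite big_cons; split=> // s st; case: (st) => _ _ _ sD.
by rewrite big_cons sD ?sr //; case: Eir.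
Qed.

Lemma big_effect_eq (I : Type) (r : seq I) (F : I -> V) a :
  (forall i, in_E K u (F i)) -> in_E K u a ->
  (forall s, is_state K u s -> \sum_(i <- r) s (F i) = s a) ->
  \sum_(i <- r) F i = a.
Proof.
move=> EF Ea sFa.
have [Esum ssum] : in_E K u (\sum_(i <- r) F i) /\
    (forall s, is_state K u s -> s (\sum_(i <- r) F i) = \sum_(i <- r) s (F i)).
  by apply: in_E_big_additive => // s st; rewrite sFa // state_le1.
by apply: effect_eq_states => // s st; rewrite ssum // sFa.
Qed.

End Effects.

Section Instruments.
Variables (R : realType) (V1 V2 : lmodType R) (K1 : V1 -> Prop) (u1 : V1)
          (K2 : V2 -> Prop) (u2 : V2).
Hypothesis UN1 : unrestricted K1 u1.

Lemma operation_effect (O : (V1 -> R) -> V2 -> R) :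
  operation K1 u1 K2 u2 O ->
  exists c, in_E K1 u1 c /\ forall s, is_state K1 u1 s -> O s u2 = s c.
Proof.
case=> Osub Oconv; apply: UN1 => [n l s wl st|s st]; first by rewrite Oconv.
by have [t [s' [t01 [_ _ s'u _] ->]]] := Osub s st; rewrite s'u mulr1.
Qed.

Lemma instrument_effects (T : finType) (Kk : T -> (V1 -> R) -> V2 -> R) :
  instrument K1 u1 K2 u2 Kk ->
  exists C : T -> V1, (forall p, in_E K1 u1 (C p)) /\
    forall p s, is_state K1 u1 s -> Kk p s u2 = s (C p).
Proof.
case=> Kop _; have /boolp.choice [C CK] := fun p => operation_effect (Kop p).
by exists C; split=> [p | p s st]; [case: (CK p) | apply: (CK p).2].
Qed.

End Instruments.

Theorem lemma3p2 (R : realType) (V1 V2 : lmodType R)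
  (K1 : V1 -> Prop) (u1 : V1) (K2 : V2 -> Prop) (u2 : V2)
  (T1 T2 : finType)
  (I : T1 -> (V1 -> R) -> (V2 -> R)) (J : T2 -> (V1 -> R) -> (V2 -> R))
  (hatI : T1 -> V1) (hatJ : T2 -> V1) :
  interval_EA K1 u1 -> generates K1 u1 -> order_determining K1 u1 ->
  unrestricted K1 u1 ->
  interval_EA K2 u2 -> generates K2 u2 -> order_determining K2 u2 ->
  unrestricted K2 u2 ->
  instrument K1 u1 K2 u2 I -> instrument K1 u1 K2 u2 J ->
  measured_obs K1 u1 u2 I hatI -> measured_obs K1 u1 u2 J hatJ ->
  coexist_instr K1 u1 K2 u2 I J ->
  coexist_obs K1 u1 hatI hatJ.
Proof.
move=> EA1 _ OD1 UN1 _ _ _ _ _ _ hatIP hatJP [Kk [instrK KI KJ]].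
have [C [EC CK]] := instrument_effects UN1 instrK.
have sum_effect_eq := big_effect_eq EA1 OD1.
exists C; split.
- split=> //; apply: sum_effect_eq (in_Eu EA1) _ => // s st.
  have [_ _ Ktot1 _] := instrK.2 s st; case: (st) => _ _ -> _.
  by rewrite -Ktot1; apply: eq_bigr => p _; rewrite -CK.
- move=> x; have [EhatI shatI] := hatIP x; apply: sum_effect_eq => // s st.
  by rewrite shatI // -(KI x s st); apply: eq_bigr => y _; rewrite -CK.
- move=> y; have [EhatJ shatJ] := hatJP y; apply: sum_effect_eq => // s st.
  by rewrite shatJ // -(KJ y s st); apply: eq_bigr => x _; rewrite -CK.
Qed.
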